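(* Let $p\equiv5\pmod{12}$, $m$ odd, $\Theta\in\mathrm{Aut}(R_k)$ with order dividing $p^s$, and $\alpha=\xi^{(p-1)/4}$ with $\xi$ a generator of $\mathbb{F}_p^*$. Then $x^{6p^s}+1=(x-\alpha)^{p^s}(x+\alpha)^{p^s}(x^2+\alpha x-1)^{p^s}(x^2+\alpha^{-1}x-1)^{p^s}$, and every skew $\Theta$-negacyclic code $\mathcal C$ of length $6p^s$ over $R_k$ decomposes as $\mathcal C=\mathcal C_1\oplus\mathcal C_2\oplus\mathcal C_3\oplus\mathcal C_4$, where $\mathcal C_1,\mathcal C_2,\mathcal C_3,\mathcal C_4$ are left ideals of $R_k[x;\Theta]/\langle(x-\alpha)^{p^s}\rangle$, $R_k[x;\Theta]/\langle(x+\alpha)^{p^s}\rangle$, $R_k[x;\Theta]/\langle(x^2+\alpha x-1)^{p^s}\rangle$, $R_k[x;\Theta]/\langle(x^2+\alpha^{-1}x-1)^{p^s}\rangle$ respectively. Then $|\mathcal C|=\prod_{i=1}^4|\mathcal C_i|$, and $\mathcal C^\perp=\mathcal C_1^\perp\oplus\mathcal C_2^\perp\oplus\mathcal C_3^\perp\oplus\mathcal C_4^\perp$, where $\mathcal C_1^\perp,\mathcal C_2^\perp$ are left ideals of $R_k[x;\Theta]/\langle(x+\alpha)^{p^s}\rangle$ and $R_k[x;\Theta]/\langle(x-\alpha)^{p^s}\rangle$, and $\mathcal C_3^\perp,\mathcal C_4^\perp$ are left ideals of $R_k[x;\Theta]/\langle(x^2+\alpha^{-1}x-1)^{p^s}\rangle$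 and $R_k[x;\Theta]/\langle(x^2+\alpha x-1)^{p^s}\rangle$. Moreover $\mathcal C$ is self-dual iff $\mathcal C_1=\mathcal C_2^\perp$, $\mathcal C_2=\mathcal C_1^\perp$, $\mathcal C_3=\mathcal C_4^\perp$, $\mathcal C_4=\mathcal C_3^\perp$.
   Context: $R_k=\mathbb{F}_{p^m}[u]/\langle u^k\rangle$; $R_k[x;\Theta]$ is the skew polynomial ring with $xa=\Theta(a)x$. A skew $\Theta$-negacyclic code of length $N$ is a left ideal of $R_k[x;\Theta]/\langle x^N+1\rangle$. The decomposition is via the Chinese Remainder isomorphism for the stated factorization into pairwise coprime central factors. $\mathcal C^\perp$ is the Euclidean dual (again skew $\Theta$-negacyclic) and $\mathcal C_i^\perp$ denotes its component in the indicated factor ring. *)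

From HB Require Import structures.
From mathcomp Require Import all_boot all_order all_algebra.
Set Implicit Arguments. Unset Strict Implicit. Unset Printing Implicit Defensive.
Import Order.TTheory GRing.Theory.
Local Open Scope ring_scope.

Section Skew.
Variable R : finComNzRingType.

(* Multiplication in the skew polynomial ring R[x;theta] (x a = theta(a) x),
   polynomials written with left coefficients  sum_i a_i x^i :
   (a x^i)(b x^j) = a theta^i(b) x^(i+j). *)
Definition skew_mul (theta : R -> R) (f g : {poly R}) : {poly R} :=
  \sum_(i < size f) \sum_(j < size g) (f`_i * iter i theta g`_j) *: 'X^(i + j).

Definition skew_pow (theta : R -> R) (f : {poly R}) (n : nat) : {poly R} :=
  iter n (skew_mul theta f) 1.

Definition vpoly n (c : 'rV[R]_n) : {poly R} := \sum_(j < n) c 0 j *: 'X^j.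

(* c and r represent the same class modulo the ideal generated by f
   (f is central in all uses, so left and two-sided ideals coincide) *)
Definition cong (theta : R -> R) (f : {poly R}) n m (c : 'rV[R]_n) (r : 'rV[R]_m) : Prop :=
  exists q : {poly R}, vpoly c - vpoly r = skew_mul theta q f.

(* D is a left ideal of R[x;theta]/<f>, elements being represented by their
   unique reduced representatives of degree < deg f = n (f monic). *)
Definition is_lideal (theta : R -> R) (f : {poly R}) n (D : {set 'rV[R]_n}) : Prop :=
  [/\ size f = n.+1, lead_coef f = 1,
      0 \in D,
      (forall c d, c \in D -> d \in D -> c + d \in D) &
      (forall (a : {poly R}) (c r : 'rV[R]_n), c \in D ->
          (exists q, skew_mul theta a (vpoly c) - vpoly r = skew_mul theta q f) ->
          r \in D)].

Definition dual n (C : {set 'rV[R]_n}) : {set 'rV[R]_n} :=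
  [set v : 'rV[R]_n | [forall c in C, \sum_(j < n) c 0 j * v 0 j == 0]].

(* C = C1 (+) C2 (+) C3 (+) C4 via the Chinese remainder map
   g |-> (g mod f1, g mod f2, g mod f3, g mod f4): each Ci is a left ideal of
   R[x;theta]/<fi> and the CRT image of C is exactly C1 x C2 x C3 x C4. *)
Definition decomp4 (theta : R -> R) (f1 f2 f3 f4 : {poly R}) n n1 n2 n3 n4
    (C : {set 'rV[R]_n}) (C1 : {set 'rV[R]_n1}) (C2 : {set 'rV[R]_n2})
    (C3 : {set 'rV[R]_n3}) (C4 : {set 'rV[R]_n4}) : Prop :=
  [/\ is_lideal theta f1 C1, is_lideal theta f2 C2,
      is_lideal theta f3 C3, is_lideal theta f4 C4 &
      ((forall c, c \in C ->
         (forall r, cong theta f1 c r -> r \in C1) /\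
         (forall r, cong theta f2 c r -> r \in C2) /\
         (forall r, cong theta f3 c r -> r \in C3) /\
         (forall r, cong theta f4 c r -> r \in C4)) /\
      (forall r1 r2 r3 r4, r1 \in C1 -> r2 \in C2 -> r3 \in C3 -> r4 \in C4 ->
         exists2 c, c \in C &
           [/\ cong theta f1 c r1, cong theta f2 c r2,
               cong theta f3 c r3 & cong theta f4 c r4]))].

End Skew.

Definition Fp_emb (p : nat) (R : nzRingType) (z : 'F_p) : R := (nat_of_ord z)%:R.

From HB Require Import structures.
From mathcomp Require Import all_boot all_order all_algebra all_field ring zify.
Set Implicit Arguments. Unset Strict Implicit. Unset Printing Implicit Defensive.
Import GRing.Theory Pdiv.Ring Pdiv.RingMonic.
Local Open Scope ring_scope.

(** Since alpha^2 = -1 in F_p, Y^6 + 1 = (Y - alpha) (Y + alpha) (Y^2 + alpha Y - 1)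
    (Y^2 - alpha Y - 1), and alpha^-1 = -alpha.  These factors have coefficients in F_p,
    which Theta fixes, so their skew p^s-th powers are ordinary powers and, by Frobenius,
    are the same factors evaluated at Y = x^(p^s).  Their Bezout cofactors are polynomials
    in x^(p^s), which is central in R_k[x; Theta] because Theta^(p^s) = 1; the resulting
    central idempotents split a left ideal C modulo x^N + 1 into its reductions C_i modulo
    the four factors (Chinese remainder theorem), so |C| = prod |C_i| and C is determined
    by its components.  Finally the Euclidean dual of C is again a left ideal: multiplying
    by x is the Theta-twisted negacyclic shift, which multiplies the inner product by the
    injective map Theta. *)

(** * Skew polynomials *)

Section IterMorphism.
Variables (R : pzRingType) (phi : {rmorphism R -> R}).

Fact iter_is_zmod_morphism i : zmod_morphism (iter i phi).
Proof. by move=> x y; elim: i => //= i ->; rewrite rmorphB. Qed.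

Fact iter_is_monoid_morphism i : monoid_morphism (iter i phi).
Proof. by split=> [|x y]; elim: i => //= i ->; rewrite ?rmorph1 ?rmorphM. Qed.

HB.instance Definition _ i :=
  GRing.isZmodMorphism.Build R R (iter i phi) (iter_is_zmod_morphism i).
HB.instance Definition _ i :=
  GRing.isMonoidMorphism.Build R R (iter i phi) (iter_is_monoid_morphism i).

End IterMorphism.

Section SkewMul.
Variables (R : finComNzRingType) (T : {rmorphism R -> R}).
Local Notation sm := (skew_mul T).

Lemma skew_mulE a g :
  sm a g = \sum_(i < size a) a`_i *: ('X^i * map_poly (iter i T) g).
Proof.
apply: eq_bigr => i _; rewrite /map_poly poly_def mulr_sumr scaler_sumr.
by apply: eq_bigr => j _; rewrite -scalerAr -exprD scalerA.
Qed.

Lemma map_poly_iter_fixed i g : map_poly T g = g -> map_poly (iter i T) g = g.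
Proof.
move=> Tg; apply/polyP => j; rewrite coef_map_id0 ?iter_fix ?rmorph0 //.
by rewrite -[in RHS]Tg coef_map.
Qed.

Lemma skew_mul_fixedr a g : map_poly T g = g -> sm a g = a * g.
Proof.
move=> Tg; rewrite skew_mulE -[in RHS](coefK a) poly_def mulr_suml.
by apply: eq_bigr => i _; rewrite map_poly_iter_fixed // scalerAl.
Qed.

Lemma skew_mulBr a g h : sm a (g - h) = sm a g - sm a h.
Proof.
rewrite !skew_mulE -sumrB; apply: eq_bigr => i _.
by rewrite rmorphB mulrBr scalerBr.
Qed.

Lemma skew_mul_fixedMr a g f : map_poly T f = f -> sm a (g * f) = sm a g * f.
Proof.
move=> Tf; rewrite !skew_mulE mulr_suml; apply: eq_bigr => i _.
by rewrite rmorphM /= (map_poly_iter_fixed _ Tf) mulrA scalerAl.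
Qed.

Lemma skew_mul_comp_Xn q E g : (0 < q)%N -> (forall r, iter q T r = r) ->
  sm (E \Po 'X^q) g = (E \Po 'X^q) * g.
Proof.
move=> q_gt0 Tq; rewrite skew_mulE -[in RHS](coefK (E \Po _)) poly_def mulr_suml.
apply: eq_bigr => i _; rewrite coef_comp_poly_Xn //.
case: dvdnP => [[k ->]|_]; last by rewrite !scale0r mul0r.
rewrite scalerAl; congr (_ * _); apply/polyP => j.
by rewrite coef_map_id0 ?rmorph0 // iterM iter_fix.
Qed.
Lemma skew_pow_fixed h k : map_poly T h = h -> skew_pow T h k = h ^+ k.
Proof.
move=> Th; elim: k => [|k IH]; first by rewrite expr0.
by rewrite /skew_pow /= -/(skew_pow T h k) IH skew_mul_fixedr -?exprS // rmorphXn /= Th.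
Qed.

Lemma skew_mulX g : sm 'X g = 'X * map_poly T g.
Proof.
rewrite skew_mulE size_polyX big_ord_recl big_ord1 /= !coefX /= scale0r add0r scale1r.
by congr (_ * _); apply: eq_map_poly.
Qed.

Lemma mulXn_map_poly_iter i g :
  'X^i * map_poly (iter i T) g = iter i (fun h => 'X * map_poly T h) g.
Proof.
elim: i => [|i IH] /=; first by rewrite mul1r map_poly_id.
rewrite -IH rmorphM /= map_polyXn mulrA -exprS -map_poly_comp.
by congr (_ * _); apply: eq_map_poly.
Qed.

End SkewMul.

Fact vpoly_is_linear (R : finComNzRingType) n : linear (@vpoly R n).
Proof.
move=> b c d; rewrite /vpoly scaler_sumr -big_split; apply: eq_bigr => j _ /=.
by rewrite !mxE scalerDl scalerA.
Qed.

HB.instance Definition _ (R : finComNzRingType) n :=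
  GRing.isLinear.Build R 'rV[R]_n {poly R} _ (@vpoly R n) (@vpoly_is_linear R n).

Section Words.
Variable R : finComNzRingType.
Implicit Types (n : nat) (f g h : {poly R}).

Definition vrow n g : 'rV[R]_n := \row_(j < n) g`_j.
Arguments vrow : clear implicits.

Lemma coef_vpoly n (c : 'rV[R]_n) (j : 'I_n) : (vpoly c)`_j = c 0 j.
Proof.
rewrite /vpoly coef_sum (bigD1 j) //= coefZ coefXn eqxx mulr1 big1 ?addr0 //.
by move=> i ij; rewrite coefZ coefXn val_eqE eq_sym (negbTE ij) mulr0.
Qed.

Lemma coef_vpoly_ge n (c : 'rV[R]_n) i : (n <= i)%N -> (vpoly c)`_i = 0.
Proof.
move=> le_ni; rewrite /vpoly coef_sum big1 // => j _.
by rewrite coefZ coefXn gtn_eqF ?mulr0 // (leq_trans (ltn_ord j)).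
Qed.

Lemma size_vpoly n (c : 'rV[R]_n) : (size (vpoly c) <= n)%N.
Proof. by apply/leq_sizeP => i; apply: coef_vpoly_ge. Qed.

Lemma vpolyK n : cancel (@vpoly R n) (vrow n).
Proof. by move=> c; apply/rowP => j; rewrite mxE coef_vpoly. Qed.

Lemma vrowK n g : (size g <= n)%N -> vpoly (vrow n g) = g.
Proof.
move=> le_gn; apply/polyP => i; case: (ltnP i n) => [lt_in|le_ni].
  by rewrite (coef_vpoly _ (Ordinal lt_in)) mxE.
by rewrite coef_vpoly_ge //; move/leq_sizeP: le_gn => ->.
Qed.

Section Reduction.
Variables (n : nat) (f : {poly R}).
Hypotheses (monf : f \is monic) (szf : size f = n.+1).

Definition rmodv g : 'rV[R]_n := vrow n (rmodp g f).

Lemma vpoly_rmodv g : vpoly (rmodv g) = rmodp g f.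
Proof. by rewrite vrowK // -ltnS -szf ltn_rmodp monic_neq0. Qed.

Lemma rmodv_vpoly (c : 'rV[R]_n) : rmodv (vpoly c) = c.
Proof. by rewrite /rmodv rmodp_small ?vpolyK // szf ltnS size_vpoly. Qed.

Lemma rmodvD g h : rmodv (g + h) = rmodv g + rmodv h.
Proof. by apply/rowP => j; rewrite !mxE rmodpD // coefD. Qed.

Lemma eq_rmodv g h : rmodv g = rmodv h <-> exists k, g - h = k * f.
Proof.
split=> [eq_gh | [k eq_gh]].
  apply/(rdvdpP monf)/rmodp_eq0P.
  by rewrite rmodpB // -!vpoly_rmodv eq_gh subrr.
apply: (can_inj (@vpolyK n)); rewrite !vpoly_rmodv; apply/eqP.
by rewrite -subr_eq0 -rmodpB // eq_gh rmodp_mull.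
Qed.

Lemma rmodv0 : rmodv 0 = 0.
Proof. by rewrite -(linear0 (@vpoly R n)) rmodv_vpoly. Qed.

Lemma rmodvZ b g : rmodv (b *: g) = b *: rmodv g.
Proof. by apply/rowP => j; rewrite !mxE rmodpZ // coefZ. Qed.

Lemma rmodv_sum_mem (D : {set 'rV[R]_n}) (I : Type) (r : seq I) (P : pred I)
    (F : I -> {poly R}) :
  0 \in D -> {in D &, forall c d, c + d \in D} ->
  (forall i, P i -> rmodv (F i) \in D) -> rmodv (\sum_(i <- r | P i) F i) \in D.
Proof.
move=> D0 DD FD; apply: (big_ind (fun g => rmodv g \in D)) => //; first by rewrite rmodv0.
by move=> g h gD hD; rewrite rmodvD //; apply: DD.
Qed.

End Reduction.
End Words.

Arguments rmodv {R} n f g.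

Section Ideals.
Variables (R : finComNzRingType) (T : {rmorphism R -> R}).
Local Notation sm := (skew_mul T).

Lemma rmodv_rmodv n m (f fN g k : {poly R}) : fN \is monic -> size fN = n.+1 ->
  f \is monic -> size f = m.+1 -> fN = k * f ->
  rmodv m f (vpoly (rmodv n fN g)) = rmodv m f g.
Proof.
move=> monN szN monf szf defN; apply/eq_rmodv => //.
exists (- (rdivp g fN * k)); rewrite vpoly_rmodv // {2}(rdivp_eq monN g) defN.
by ring.
Qed.

Section FixedModulus.
Variables (m : nat) (f : {poly R}).
Hypotheses (Tf : map_poly T f = f) (monf : f \is monic) (szf : size f = m.+1).

Lemma skew_modP g (r : 'rV[R]_m) :
  (exists k, g - vpoly r = sm k f) <-> rmodv m f g = r.
Proof.
rewrite -{2}(rmodv_vpoly szf r) eq_rmodv //.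
by split=> -[k eqk]; exists k; rewrite eqk ?skew_mul_fixedr.
Qed.

Lemma congP n (c : 'rV[R]_n) (r : 'rV[R]_m) : cong T f c r <-> rmodv m f (vpoly c) = r.
Proof. exact: skew_modP. Qed.

Lemma lidealP (D : {set 'rV[R]_m}) :
  is_lideal T f D <->
  [/\ 0 \in D, {in D &, forall c d, c + d \in D} &
      forall a c, c \in D -> rmodv m f (sm a (vpoly c)) \in D].
Proof.
split=> [[_ _ D0 DD Dsm] | [D0 DD Dsm]]; split=> //.
- by move=> a c cD; apply: (Dsm a c) => //; apply/skew_modP.
- exact/monicP.
- by move=> a c r cD /skew_modP <-; apply: Dsm.
Qed.

End FixedModulus.

End Ideals.

Definition component (R : finComNzRingType) n m (f : {poly R}) (D : {set 'rV[R]_n}) :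
  {set 'rV[R]_m} := [set rmodv m f (vpoly c) | c in D].

Section Component.
Variables (R : finComNzRingType) (T : {rmorphism R -> R}).
Variables (n : nat) (fN : {poly R}) (D : {set 'rV[R]_n}).
Hypotheses (TfN : map_poly T fN = fN) (monN : fN \is monic) (szN : size fN = n.+1).
Hypothesis lidD : is_lideal T fN D.

Variables (m : nat) (f k : {poly R}).
Hypotheses (Tf : map_poly T f = f) (monf : f \is monic) (szf : size f = m.+1).
Hypothesis defN : fN = k * f.

Lemma component_lideal : is_lideal T f (component m f D).
Proof.
have [D0 DD Dsm] := (lidealP TfN monN szN D).1 lidD.
apply/lidealP => //; split.
- by apply/imsetP; exists 0; rewrite // linear0 rmodv0.
- move=> _ _ /imsetP[c cD ->] /imsetP[d dD ->].
  by apply/imsetP; exists (c + d); rewrite ?linearD ?rmodvD //; apply: DD.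
move=> a _ /imsetP[c cD ->]; apply/imsetP; exists (rmodv n fN (skew_mul T a (vpoly c))).
  exact: Dsm.
rewrite (rmodv_rmodv _ monN szN monf szf defN); apply/(eq_rmodv monf szf).
have /(eq_rmodv monf szf)[l eq_l] :
    rmodv m f (vpoly (rmodv m f (vpoly c))) = rmodv m f (vpoly c).
  by rewrite rmodv_vpoly.
by exists (skew_mul T a l); rewrite -skew_mulBr eq_l skew_mul_fixedMr.
Qed.

End Component.

(** * The Chinese remainder decomposition *)

Section ChineseRemainder.
Variables (S : comNzRingType) (I : finType) (f h : I -> S).
Hypothesis bezout : \sum_i h i * \prod_(j | j != i) f j = 1.

Lemma crt_dvd x : (forall i, exists k, x = k * f i) -> exists k, x = k * \prod_i f i.
Proof.
case/fin_all_exists=> k defx; exists (\sum_i h i * k i).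
rewrite -[LHS]mulr1 -[in LHS]bezout mulr_sumr mulr_suml; apply: eq_bigr => i _.
by rewrite [in RHS](bigD1 i) //= {1}(defx i); ring.
Qed.

Lemma crt_congr (g : I -> S) i :
  exists k, \sum_j h j * \prod_(l | l != j) f l * g j - g i = k * f i.
Proof.
have -> : g i = \sum_j h j * \prod_(l | l != j) f l * g i.
  by rewrite -mulr_suml bezout mul1r.
rewrite -sumrB (bigD1 i) //= subrr add0r.
exists (\sum_(j | j != i) h j * \prod_(l | (l != j) && (l != i)) f l * (g j - g i)).
rewrite mulr_suml; apply: eq_bigr => j ji; rewrite (bigD1 i) 1?eq_sym //=; ring.
Qed.

End ChineseRemainder.

Section ChineseRemainderCode.
Variables (R : finComNzRingType) (T : {rmorphism R -> R}) (I : finType).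
Variables (n : nat) (m : I -> nat) (fN : {poly R}) (f h : I -> {poly R}).
Hypotheses (Tf : forall i, map_poly T (f i) = f i) (monf : forall i, f i \is monic).
Hypotheses (szf : forall i, size (f i) = (m i).+1) (szN : size fN = n.+1).
Hypothesis defN : fN = \prod_i f i.
Hypothesis bezout : \sum_i h i * \prod_(j | j != i) f j = 1.
Hypothesis central_idem : forall i g,
  skew_mul T (h i * \prod_(j | j != i) f j) g = h i * \prod_(j | j != i) f j * g.

Let TfN : map_poly T fN = fN.
Proof. by rewrite defN rmorph_prod; apply: eq_bigr => i _; apply: Tf. Qed.

Let monN : fN \is monic.
Proof. by rewrite defN monic_prod. Qed.

Let factor_dvd i : fN = \prod_(j | j != i) f j * f i.
Proof. by rewrite defN (bigD1 i) //= mulrC. Qed.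

Definition crt_map (c : 'rV[R]_n) : {dffun forall i, 'rV[R]_(m i)} :=
  finfun (fun i => rmodv (m i) (f i) (vpoly c)).

Lemma crt_map_inj : injective crt_map.
Proof.
move=> c d /ffunP eq_cd; rewrite -(rmodv_vpoly szN c) -(rmodv_vpoly szN d).
apply/(eq_rmodv monN szN); rewrite defN; apply: (crt_dvd bezout) => i.
by apply/(eq_rmodv (monf i) (szf i)); have := eq_cd i; rewrite !ffunE.
Qed.

Section Lift.
Variable D : {set 'rV[R]_n}.
Hypothesis lidD : is_lideal T fN D.

Lemma crt_lift (c : I -> 'rV[R]_n) : (forall i, c i \in D) ->
  exists2 d, d \in D & forall i, rmodv (m i) (f i) (vpoly d) = rmodv (m i) (f i) (vpoly (c i)).
Proof.
move=> cD; have [D0 DD Dsm] := (lidealP TfN monN szN D).1 lidD.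
set g := \sum_i h i * \prod_(j | j != i) f j * vpoly (c i).
exists (rmodv n fN g) => [|i].
  by apply: rmodv_sum_mem => // i _; rewrite -central_idem; apply: Dsm.
rewrite (rmodv_rmodv _ monN szN (monf i) (szf i) (factor_dvd i)).
apply/(eq_rmodv (monf i) (szf i)); exact: crt_congr.
Qed.

Lemma crt_component_lideal i : is_lideal T (f i) (component (m i) (f i) D).
Proof. exact: (component_lideal TfN monN szN lidD (Tf i) (monf i) (szf i) (factor_dvd i)). Qed.

Lemma crt_map_lideal :
  crt_map @: D = setXn (fun i => component (m i) (f i) D).
Proof.
apply/setP => x; apply/imsetP/setXnP => [[c cD ->] i | xD].
  by rewrite ffunE; apply/imsetP; exists c.
have /fin_all_exists2[c cD defx] :
    forall i, exists2 c, c \in D & x i = rmodv (m i) (f i) (vpoly c).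
  by move=> i; apply/imsetP/xD.
have [d dD eq_d] := crt_lift cD; exists d => //.
by apply/ffunP => i; rewrite ffunE eq_d defx.
Qed.

Lemma card_lideal : #|D| = (\prod_i #|component (m i) (f i) D|)%N.
Proof. by rewrite -cardsXn -crt_map_lideal card_imset //; apply: crt_map_inj. Qed.

End Lift.

Lemma eq_lideal (D1 D2 : {set 'rV[R]_n}) : is_lideal T fN D1 -> is_lideal T fN D2 ->
  D1 = D2 <-> forall i, component (m i) (f i) D1 = component (m i) (f i) D2.
Proof.
move=> lid1 lid2; split=> [-> // | eq12].
apply: (imset_inj crt_map_inj); rewrite !crt_map_lideal //.
by apply/setP => x; rewrite !in_setXn; apply/eq_forallb => i; rewrite eq12.
Qed.

End ChineseRemainderCode.

Section FourFactors.
Variables (R : finComNzRingType) (T : {rmorphism R -> R}).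
Variables (n m1 m2 m3 m4 : nat) (fN f1 f2 f3 f4 : {poly R}) (h : 'I_4 -> {poly R}).
Let m := tnth [tuple m1; m2; m3; m4].
Let f := tnth [tuple f1; f2; f3; f4].
Hypotheses (Tf : forall i, map_poly T (f i) = f i) (monf : forall i, f i \is monic).
Hypotheses (szf : forall i, size (f i) = (m i).+1) (szN : size fN = n.+1).
Hypothesis defN : fN = \prod_i f i.
Hypothesis bezout : \sum_i h i * \prod_(j | j != i) f j = 1.
Hypothesis central_idem : forall i g,
  skew_mul T (h i * \prod_(j | j != i) f j) g = h i * \prod_(j | j != i) f j * g.

Let congi i (c : 'rV[R]_n) (r : 'rV[R]_(m i)) :
  cong T (f i) c r <-> rmodv (m i) (f i) (vpoly c) = r.
Proof. exact: congP. Qed.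

Lemma decomp4_components (D : {set 'rV[R]_n}) : is_lideal T fN D ->
  decomp4 T f1 f2 f3 f4 D (component m1 f1 D) (component m2 f2 D)
    (component m3 f3 D) (component m4 f4 D).
Proof.
move=> lidD; have lidi := crt_component_lideal Tf monf szf szN defN lidD.
have in_comp i c (r : 'rV[R]_(m i)) :
    c \in D -> cong T (f i) c r -> r \in component (m i) (f i) D.
  by move=> cD /congi <-; apply/imsetP; exists c.
split; [exact: (lidi ord0) | exact: (lidi (lift ord0 ord0)) |
        exact: (lidi (lift ord0 (lift ord0 ord0))) | exact: (lidi ord_max) | split].
  move=> c cD; split; [|split; [|split]]; move=> r; first exact: (in_comp ord0).
  - exact: (in_comp (lift ord0 ord0)).
  - exact: (in_comp (lift ord0 (lift ord0 ord0))).
  - exact: (in_comp ord_max).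
move=> _ _ _ _ /imsetP[c1 c1D ->] /imsetP[c2 c2D ->] /imsetP[c3 c3D ->] /imsetP[c4 c4D ->].
have cD : forall i, tnth [tuple c1; c2; c3; c4] i \in D by case=> -[|[|[|[|//]]]] ?.
have [d dD eq_d] := crt_lift Tf monf szf szN defN bezout central_idem lidD cD.
exists d => //; split.
- exact: (@congi ord0 _ _).2 (eq_d ord0).
- exact: (@congi (lift ord0 ord0) _ _).2 (eq_d (lift ord0 ord0)).
- exact: (@congi (lift ord0 (lift ord0 ord0)) _ _).2 (eq_d (lift ord0 (lift ord0 ord0))).
- exact: (@congi ord_max _ _).2 (eq_d ord_max).
Qed.

Lemma card_lideal4 (D : {set 'rV[R]_n}) : is_lideal T fN D ->
  #|D| = (#|component m1 f1 D| * #|component m2 f2 D| *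
          #|component m3 f3 D| * #|component m4 f4 D|)%N.
Proof.
move=> lidD; rewrite (card_lideal Tf monf szf szN defN bezout central_idem lidD).
by rewrite !big_ord_recr big_ord0 /= mul1n.
Qed.

Lemma eq_lideal4 (D1 D2 : {set 'rV[R]_n}) : is_lideal T fN D1 -> is_lideal T fN D2 ->
  D1 = D2 <->
  [/\ component m1 f1 D1 = component m1 f1 D2, component m2 f2 D1 = component m2 f2 D2,
      component m3 f3 D1 = component m3 f3 D2 & component m4 f4 D1 = component m4 f4 D2].
Proof.
move=> lid1 lid2; rewrite (eq_lideal Tf monf szf szN defN bezout central_idem lid1 lid2).
split=> [eq12 | [eq1 eq2 eq3 eq4]]; last by case=> -[|[|[|[|//]]]] ?.
by split; [apply: (eq12 ord0) | apply: (eq12 (lift ord0 ord0)) |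
           apply: (eq12 (lift ord0 (lift ord0 ord0))) | apply: (eq12 ord_max)].
Qed.

End FourFactors.

(** * The dual code *)

Section Dual.
Variables (R : finComNzRingType) (T : {rmorphism R -> R}).

(* For deg P <= k, [sh P] is x P reduced modulo x^(k+1) + 1 in R[x; T]. *)
Lemma dot_negacyclic_shift k (A B : {poly R}) :
  let sh P := 'X * map_poly T P - (T P`_k)%:P * ('X^(k.+1) + 1) in
  \sum_(0 <= j < k.+1) (sh A)`_j * (sh B)`_j = T (\sum_(0 <= j < k.+1) A`_j * B`_j).
Proof.
have coef_sh P j : ('X * map_poly T P - (T P`_k)%:P * ('X^(k.+1) + 1))`_j =
    (if j is j'.+1 then T P`_j' else 0) - T P`_k * ((j == k.+1)%:R + (j == 0)%:R).
  by rewrite coefB coefXM coefCM coefD coefXn coef1 coef_map; case: j.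
move=> sh; rewrite big_nat_recl // [in RHS]big_nat_recr //= rmorphD rmorph_sum addrC.
rewrite !coef_sh /= !add0r !mulr1 mulrNN -rmorphM; congr (_ + _).
apply: eq_big_nat => j /andP[_ lt_jk]; rewrite !coef_sh eqSS ltn_eqF //.
by rewrite !addr0 !mulr0 !subr0 rmorphM.
Qed.

Hypothesis injT : injective T.
Variable n : nat.
Hypothesis n_gt0 : (0 < n)%N.
Local Notation fN := ('X^n + 1 : {poly R}).
Local Notation dot c v := (\sum_(j < n) c 0 j * v 0 j).

Let TfN : map_poly T fN = fN.
Proof. by rewrite rmorphD rmorph1 /= map_polyXn. Qed.

Let monN : fN \is monic.
Proof. by rewrite monicXnaddC. Qed.

Let szN : size fN = n.+1.
Proof. by rewrite size_XnaddC. Qed.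

Definition skew_shift (v : 'rV[R]_n) : 'rV[R]_n :=
  rmodv n fN ('X * map_poly T (vpoly v)).

Lemma skew_shiftE v : vpoly (skew_shift v) =
  'X * map_poly T (vpoly v) - (T (vpoly v)`_n.-1)%:P * fN.
Proof.
rewrite vpoly_rmodv // -[X in rmodp X _](subrK ((T (vpoly v)`_n.-1)%:P * fN)) addrC.
rewrite rmodp_addl_mul_small // szN ltnS; apply/leq_sizeP => i le_ni.
rewrite coefB coefXM coefCM coefD coefXn coef1 coef_map /=.
rewrite eqn0Ngt (leq_trans n_gt0 le_ni) /= addr0.
have [->|ne_in] := eqVneq i n; first by rewrite mulr1 subrr.
rewrite mulr0 subr0 coef_vpoly_ge ?rmorph0 // -ltnS prednK ?(leq_trans n_gt0) //.
by rewrite ltn_neqAle eq_sym ne_in.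
Qed.

Lemma dot_skew_shift (c v : 'rV[R]_n) : dot (skew_shift c) (skew_shift v) = T (dot c v).
Proof.
have dotE (w z : 'rV[R]_n) : dot w z = \sum_(0 <= j < n) (vpoly w)`_j * (vpoly z)`_j.
  by rewrite big_mkord; apply: eq_bigr => j _; rewrite !coef_vpoly.
rewrite !dotE !skew_shiftE; have := dot_negacyclic_shift n.-1 (vpoly c) (vpoly v).
by rewrite prednK.
Qed.

Lemma skew_shift_inj : injective skew_shift.
Proof.
move=> c v eq_cv; have := congr1 (@vpoly R n) eq_cv; rewrite !skew_shiftE => eq_sh.
have eq_top : T (vpoly c)`_n.-1 = T (vpoly v)`_n.-1.
  have := congr1 (horner^~ 0) eq_sh.
  by rewrite /= !hornerE expr0n gtn_eqF //= add0r !mulr1 => /oppr_inj.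
have lregX : GRing.lreg ('X : {poly R}) by apply: lreg_lead; rewrite lead_coefX; apply: lreg1.
move: eq_sh; rewrite eq_top => /addIr /lregX /(map_inj_poly injT (rmorph0 T)).
exact: (can_inj (@vpolyK R n)).
Qed.

Lemma rmodv_skew_shift g :
  rmodv n fN ('X * map_poly T g) = skew_shift (rmodv n fN g).
Proof.
apply/(eq_rmodv monN szN); exists ('X * map_poly T (rdivp g fN)).
by rewrite -mulrBr -rmorphB vpoly_rmodv // {1}(rdivp_eq monN g) addrK rmorphM /= TfN mulrA.
Qed.

Variable C : {set 'rV[R]_n}.
Hypothesis lidC : is_lideal T fN C.

Lemma skew_shift_mem (c : 'rV[R]_n) : c \in C -> skew_shift c \in C.
Proof.
have [_ _ Csm] := (lidealP TfN monN szN C).1 lidC.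
by move=> cC; rewrite /skew_shift -skew_mulX; apply: Csm.
Qed.

Lemma skew_shift_onto : skew_shift @: C = C.
Proof.
apply/eqP; rewrite eqEcard card_imset ?leqnn ?andbT; last exact: skew_shift_inj.
by apply/subsetP => _ /imsetP[c cC ->]; apply: skew_shift_mem.
Qed.

Lemma dualP (v : 'rV[R]_n) : reflect (forall c, c \in C -> dot c v = 0) (v \in dual C).
Proof.
rewrite inE; apply: (iffP forallP) => [Cv c cC | Cv c].
  by have /implyP/(_ cC)/eqP := Cv c.
by apply/implyP => cC; rewrite Cv.
Qed.

Lemma dual_skew_shift (v : 'rV[R]_n) : v \in dual C -> skew_shift v \in dual C.
Proof.
move/dualP=> Cv; apply/dualP => c; rewrite -skew_shift_onto => /imsetP[d dC ->].
by rewrite dot_skew_shift Cv ?rmorph0.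
Qed.

Lemma dual_lideal : is_lideal T fN (dual C).
Proof.
have dual0 : 0 \in dual C.
  by apply/dualP => c _; rewrite big1 // => j _; rewrite mxE mulr0.
have dualD : {in dual C &, forall v w, v + w \in dual C}.
  move=> v w /dualP Cv /dualP Cw; apply/dualP => c cC.
  rewrite (eq_bigr (fun j => c 0 j * v 0 j + c 0 j * w 0 j)).
    by rewrite big_split /= Cv ?Cw ?addr0.
  by move=> j _; rewrite mxE mulrDr.
have dualZ b v : v \in dual C -> b *: v \in dual C.
  move/dualP=> Cv; apply/dualP => c cC.
  rewrite (eq_bigr (fun j => b * (c 0 j * v 0 j))); first by rewrite -mulr_sumr Cv ?mulr0.
  by move=> j _; rewrite mxE mulrCA.
apply/lidealP => //; split=> // a v vC; rewrite skew_mulE.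
apply: rmodv_sum_mem => // i _; rewrite rmodvZ //; apply: dualZ.
rewrite mulXn_map_poly_iter; elim: (nat_of_ord i) => [|j IHj] /=.
  by rewrite rmodv_vpoly.
by rewrite rmodv_skew_shift; apply: dual_skew_shift.
Qed.

End Dual.

(** * The factorization of x^(6 p^s) + 1 *)

Section PrimeField.
Variables (p : nat) (R : nzRingType).
Hypotheses (p_pr : prime p) (pcharRp : p \in [pchar R]).

Let natr_modp k : (k %% (Zp_trunc (pdiv p)).+2)%:R = k%:R :> R.
Proof. by rewrite Fp_cast // (GRing.natr_mod_pchar pcharRp). Qed.

Lemma Fp_embD (x y : 'F_p) : Fp_emb R (x + y) = Fp_emb R x + Fp_emb R y.
Proof. by rewrite /Fp_emb /= natr_modp natrD. Qed.

Lemma Fp_embM (x y : 'F_p) : Fp_emb R (x * y) = Fp_emb R x * Fp_emb R y.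
Proof. by rewrite /Fp_emb /= natr_modp natrM. Qed.

Lemma Fp_emb1 : Fp_emb R (1 : 'F_p) = 1.
Proof. by rewrite /Fp_emb /= natr_modp. Qed.

Lemma Fp_embN (x : 'F_p) : Fp_emb R (- x) = - Fp_emb R x.
Proof. by apply/eqP; rewrite -addr_eq0 -Fp_embD addNr. Qed.

Lemma natr_exp_pchar k s : (k%:R : R) ^+ (p ^ s) = k%:R.
Proof.
elim: s => [|s IHs]; first by rewrite expr1.
by rewrite expnSr exprM IHs -(pFrobenius_autE pcharRp) pFrobenius_aut_nat.
Qed.

End PrimeField.

Lemma prim_root_half (R : idomainType) n (z : R) : (n.*2).-primitive_root z -> z ^+ n = -1.
Proof.
move=> prim_z; have n_gt0 : (0 < n)%N by rewrite -double_gt0 (prim_order_gt0 prim_z).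
have /eqP := prim_expr_order prim_z; rewrite -addnn exprD -expr2 sqrf_eq1.
case/orP=> /eqP // zn1; have := prim_order_dvd prim_z n; rewrite zn1 eqxx.
by move/(dvdn_leq n_gt0); rewrite leqNgt -addnn -{1}[n]add0n ltn_add2r n_gt0.
Qed.

Section SexticFactors.
Variables (S : comNzRingType) (A K : S).

Definition sextic_factor (Y : S) : 'I_4 -> S :=
  tnth [tuple Y - A; Y + A; Y ^+ 2 + A * Y - 1; Y ^+ 2 - A * Y - 1].

Definition sextic_cofactor (Y : S) : 'I_4 -> S :=
  let c := 6 * A * K ^+ 2 in
  tnth [tuple - c; c; - c * (Y ^+ 2 - 2) * (Y + A); c * (Y ^+ 2 - 2) * (Y - A)].

Hypothesis AA : A * A = -1.

Lemma prod_sextic_factor Y : \prod_i sextic_factor Y i = Y ^+ 6 + 1.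
Proof.
rewrite /sextic_factor !big_ord_recr big_ord0 /= !(tnth_nth 0) /= mul1r.
have -> : (Y - A) * (Y + A) * (Y ^+ 2 + A * Y - 1) * (Y ^+ 2 - A * Y - 1)
    = (Y ^+ 2 - A * A) * ((Y ^+ 2 - 1) ^+ 2 - A * A * Y ^+ 2) by ring.
by rewrite AA; ring.
Qed.

Hypothesis K6 : 6 * K = 1.

(* Writing F_i for the factors, F_0 - F_1 and (Y + A) F_3 - (Y - A) F_2 both equal -2A
   and F_2 F_3 - (Y^2 - 2) F_0 F_1 = 1 - 2A^2, so the sum is -12 K^2 A^2 (1 - 2A^2). *)
Lemma sextic_bezout Y :
  \sum_i sextic_cofactor Y i * \prod_(j | j != i) sextic_factor Y j = 1.
Proof.
rewrite /sextic_factor /sextic_cofactor !big_ord_recr big_ord0 /=.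
rewrite !(big_mkcond (fun j => j != _)) !big_ord_recr !big_ord0 /=.
rewrite !(tnth_nth 0) /= !mul1r !mulr1 add0r.
transitivity (- 12 * K ^+ 2 * (A * A) * (1 - 2 * (A * A))); first by ring.
by rewrite AA; transitivity ((6 * K) ^+ 2); [ring | rewrite K6 expr1n].
Qed.

End SexticFactors.

Lemma rmorph_sextic_factor (S S' : comNzRingType) (phi : {rmorphism S -> S'}) (A Y : S) i :
  phi (sextic_factor A Y i) = sextic_factor (phi A) (phi Y) i.
Proof.
rewrite /sextic_factor; case: i => -[|[|[|[|//]]]] ?; rewrite !(tnth_nth 0) /=;
by rewrite ?(rmorphB, rmorphD, rmorphM, rmorphXn, rmorph1).
Qed.

Lemma rmorph_sextic_cofactor (S S' : comNzRingType) (phi : {rmorphism S -> S'}) (A K Y : S) i :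
  phi (sextic_cofactor A K Y i) = sextic_cofactor (phi A) (phi K) (phi Y) i.
Proof.
rewrite /sextic_cofactor; case: i => -[|[|[|[|//]]]] ?; rewrite !(tnth_nth 0) /=;
by rewrite ?(rmorphN, rmorphB, rmorphD, rmorphM, rmorphXn, rmorph1).
Qed.

Lemma iter_pFrobenius_aut (S : comNzRingType) p (pcharSp : p \in [pchar S]) s x :
  iter s (pFrobenius_aut pcharSp) x = x ^+ (p ^ s).
Proof. by elim: s => [|s IHs]; rewrite ?expr1 //= IHs expnSr exprM. Qed.

Lemma monic_size_Xn_add (R : nzRingType) n (g : {poly R}) : (size g <= n)%N ->
  'X^n + g \is monic /\ size ('X^n + g) = n.+1.
Proof.
move=> le_gn; have lt_gX : (size g < size ('X^n : {poly R}))%N by rewrite size_polyXn.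
by rewrite monicE lead_coefDl // lead_coefXn size_polyDl // size_polyXn.
Qed.

Section NegacyclicSextic.
Variables (R : finComNzRingType) (T : {rmorphism R -> R}) (p s : nat) (a K : R).
Hypotheses (p_pr : prime p) (pcharRp : p \in [pchar R]).
Hypotheses (injT : injective T) (Tq : forall r, iter (p ^ s) T r = r).
Hypotheses (aa : a * a = -1) (Ta : T a = a) (aq : a ^+ (p ^ s) = a) (K6 : 6 * K = 1).

Local Notation q := (p ^ s)%N.
Local Notation A := (a%:P).
Let f1 := skew_pow T ('X - A) q.
Let f2 := skew_pow T ('X + A) q.
Let f3 := skew_pow T ('X^2 + a *: 'X - 1) q.
Let f4 := skew_pow T ('X^2 + (- a) *: 'X - 1) q.
Let f := tnth [tuple f1; f2; f3; f4].
Let h := sextic_cofactor A K%:P ('X^q).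
Let m := tnth [tuple q; q; (2 * q)%N; (2 * q)%N].

Let q_gt0 : (0 < q)%N.
Proof. by rewrite expn_gt0 prime_gt0. Qed.

Let TA : map_poly T A = A.
Proof. by rewrite map_polyC /= Ta. Qed.

Let Tfactor Y i : map_poly T (sextic_factor A Y i) = sextic_factor A (map_poly T Y) i.
Proof. by rewrite rmorph_sextic_factor /= TA. Qed.

Let ef i : f i = sextic_factor A ('X^q) i.
Proof.
have pcharP : p \in [pchar {poly R}] by rewrite pchar_poly.
transitivity (skew_pow T (sextic_factor A 'X i) q).
  by rewrite /f /f3 /f4 -!mul_polyC polyCN mulNr; case: i => -[|[|[|[|//]]]].
rewrite skew_pow_fixed; last by rewrite Tfactor map_polyX.
rewrite -(iter_pFrobenius_aut pcharP) rmorph_sextic_factor /=.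
by rewrite !iter_pFrobenius_aut -polyC_exp aq.
Qed.

Let Tf i : map_poly T (f i) = f i.
Proof. by rewrite ef Tfactor map_polyXn. Qed.

Let monf_szf i : f i \is monic /\ size (f i) = (m i).+1.
Proof.
have sz_low c : (size (c%:P * 'X^q - 1 : {poly R})%R <= 2 * q)%N.
  rewrite (leq_trans (size_polyD _ _)) // geq_max size_polyN size_polyC oner_neq0.
  rewrite mul_polyC (leq_trans (size_scale_leq _ _)) ?size_polyXn //=; lia.
rewrite ef /m /sextic_factor; case: i => -[|[|[|[|//]]]] ? ; rewrite !(tnth_nth 0) /=.
- by rewrite monicXnsubC ?size_XnsubC.
- by rewrite monicXnaddC ?size_XnaddC.
- by rewrite -exprM mulnC -addrA; apply: monic_size_Xn_add.
- by rewrite -exprM mulnC -addrA -mulNr -polyCN; apply: monic_size_Xn_add.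
Qed.

Let AA : A * A = -1.
Proof. by rewrite -polyCM aa polyCN polyC1. Qed.

Let defN : 'X^(6 * q) + 1 = \prod_i f i.
Proof. by rewrite (eq_bigr _ (fun i _ => ef i)) prod_sextic_factor // -exprM mulnC. Qed.

Let bezout : \sum_i h i * \prod_(j | j != i) f j = 1.
Proof.
under eq_bigr do rewrite (eq_bigr _ (fun j _ => ef j)).
by apply: sextic_bezout; rewrite // -polyC_natr -polyCM K6.
Qed.

(* The idempotents are polynomials in x^q, which is central because T^q = id. *)
Let central_idem i g :
  skew_mul T (h i * \prod_(j | j != i) f j) g = h i * \prod_(j | j != i) f j * g.
Proof.
have -> : h i * \prod_(j | j != i) f j =
    (sextic_cofactor A K%:P 'X i * \prod_(j | j != i) sextic_factor A 'X j) \Po 'X^q.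
  rewrite rmorphM rmorph_prod rmorph_sextic_cofactor /= !comp_polyC comp_polyX.
  congr (_ * _); apply: eq_bigr => j _.
  by rewrite ef rmorph_sextic_factor /= comp_polyC comp_polyX.
exact: skew_mul_comp_Xn.
Qed.

Lemma skew_negacyclic_sextic :
  'X^(6 * q) + 1 = skew_mul T (skew_mul T (skew_mul T f1 f2) f3) f4 /\
  forall C : {set 'rV[R]_(6 * q)}, is_lideal T ('X^(6 * q) + 1) C ->
  exists (C1 : {set 'rV[R]_q}) (C2 : {set 'rV[R]_q})
         (C3 : {set 'rV[R]_(2 * q)}) (C4 : {set 'rV[R]_(2 * q)})
         (C1perp : {set 'rV[R]_q}) (C2perp : {set 'rV[R]_q})
         (C3perp : {set 'rV[R]_(2 * q)}) (C4perp : {set 'rV[R]_(2 * q)}),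
    [/\ decomp4 T f1 f2 f3 f4 C C1 C2 C3 C4,
        #|C| = (#|C1| * #|C2| * #|C3| * #|C4|)%N,
        decomp4 T f1 f2 f3 f4 (dual C) C2perp C1perp C4perp C3perp &
        (C = dual C <->
           [/\ C1 = C2perp, C2 = C1perp, C3 = C4perp & C4 = C3perp])].
Proof.
have monf i : f i \is monic by case: (monf_szf i).
have szf i : size (f i) = (m i).+1 by case: (monf_szf i).
have N_gt0 : (0 < 6 * q)%N by rewrite muln_gt0.
have szN : size ('X^(6 * q) + 1 : {poly R}) = (6 * q).+1 by rewrite size_XnaddC.
split.
  rewrite !skew_mul_fixedr ?(Tf ord0, Tf (lift ord0 ord0)) //;
    rewrite ?(Tf (lift ord0 (lift ord0 ord0)), Tf ord_max) //.
  by rewrite defN !big_ord_recr big_ord0 /= mul1r.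
move=> C lidC; have lidCd := dual_lideal injT N_gt0 lidC.
exists (component q f1 C), (component q f2 C).
exists (component (2 * q) f3 C), (component (2 * q) f4 C).
exists (component q f2 (dual C)), (component q f1 (dual C)).
exists (component (2 * q) f4 (dual C)), (component (2 * q) f3 (dual C)).
split.
- exact: (decomp4_components Tf monf szf szN defN bezout central_idem lidC).
- exact: (card_lideal4 Tf monf szf szN defN bezout central_idem lidC).
- exact: (decomp4_components Tf monf szf szN defN bezout central_idem lidCd).
- exact: (eq_lideal4 Tf monf szf szN defN bezout central_idem lidC lidCd).
Qed.

End NegacyclicSextic.

Theorem theorem5p2 (p m k s : nat) (F : finFieldType) (R : finComNzRingType)
    (iota : {rmorphism F -> R}) (u : R) (Theta : {rmorphism R -> R}) (xi : 'F_p) :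
  prime p -> (p %% 12 = 5)%N -> odd m -> #|F| = (p ^ m)%N ->
  (* R = R_k = F[u]/<u^k> with F = F_(p^m) *)
  u ^+ k = 0 ->
  bijective (fun a : 'rV[F]_k => \sum_(i < k) iota (a 0 i) * u ^+ i) ->
  (* Theta in Aut(R_k), of order dividing p^s *)
  bijective Theta -> (forall r : R, iter (p ^ s)%N Theta r = r) ->
  (* xi generates F_p^* *)
  (p.-1)%N.-primitive_root xi ->
  let alpha : 'F_p := xi ^+ (p.-1 %/ 4)%N in
  let a : R := Fp_emb R alpha in
  let ai : R := Fp_emb R alpha^-1 in
  let N := (6 * p ^ s)%N in
  let fN : {poly R} := 'X^N + 1 in
  let f1 := skew_pow Theta ('X - a%:P) (p ^ s) in
  let f2 := skew_pow Theta ('X + a%:P) (p ^ s) in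
  let f3 := skew_pow Theta ('X^2 + a *: 'X - 1) (p ^ s) in
  let f4 := skew_pow Theta ('X^2 + ai *: 'X - 1) (p ^ s) in
  fN = skew_mul Theta (skew_mul Theta (skew_mul Theta f1 f2) f3) f4 /\
  forall C : {set 'rV[R]_N}, is_lideal Theta fN C ->
  exists (C1 : {set 'rV[R]_(p ^ s)}) (C2 : {set 'rV[R]_(p ^ s)})
         (C3 : {set 'rV[R]_(2 * p ^ s)}) (C4 : {set 'rV[R]_(2 * p ^ s)})
         (C1perp : {set 'rV[R]_(p ^ s)}) (C2perp : {set 'rV[R]_(p ^ s)})
         (C3perp : {set 'rV[R]_(2 * p ^ s)}) (C4perp : {set 'rV[R]_(2 * p ^ s)}),
    [/\ decomp4 Theta f1 f2 f3 f4 C C1 C2 C3 C4,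
        #|C| = (#|C1| * #|C2| * #|C3| * #|C4|)%N,
        (* C1perp lives in R[x]/<f2>, C2perp in R[x]/<f1>, C3perp in R[x]/<f4>,
           C4perp in R[x]/<f3> *)
        decomp4 Theta f1 f2 f3 f4 (dual C) C2perp C1perp C4perp C3perp &
        (C = dual C <->
           [/\ C1 = C2perp, C2 = C1perp, C3 = C4perp & C4 = C3perp])].
Proof.
(* Of the description of R_k only its characteristic is needed. *)
move=> p_pr p12 _ cardF _ _ bijT Tq prim_xi alpha a ai.
have pcharRp : p \in [pchar R] := rmorph_pchar iota (card_finPcharP cardF p_pr).
have alpha2 : alpha ^+ 2 = -1.
  rewrite -exprM (_ : (p.-1 %/ 4 * 2 = p.-1 %/ 2)%N); last by lia.
  by apply: prim_root_half; rewrite (_ : ((p.-1 %/ 2).*2 = p.-1)%N) //; lia.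
have aa : a * a = -1 by rewrite -Fp_embM // -expr2 alpha2 Fp_embN // Fp_emb1.
have eai : ai = - a.
  have alpha_neq0 : alpha != 0.
    by apply: contra_eq_neq alpha2 => ->; rewrite expr0n eq_sym oppr_eq0 oner_eq0.
  rewrite /ai -Fp_embN //; congr Fp_emb; apply: (mulfI alpha_neq0).
  by rewrite mulfV // mulrN -expr2 alpha2 opprK.
have K6 : 6 * ((p.+1 %/ 6)%:R : R) = 1.
  rewrite -natrM mulnC divnK; last by apply/dvdnP; exists (p %/ 12 * 2 + 1)%N; lia.
  by rewrite -addn1 natrD (pcharf0 pcharRp) add0r.
have Ta : Theta a = a by rewrite rmorph_nat.
have aq : a ^+ (p ^ s) = a by rewrite natr_exp_pchar.
rewrite /= eai.
exact: (skew_negacyclic_sextic p_pr pcharRp (bij_inj bijT) Tq aa Ta aq K6).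
Qed.
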